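(* Let $g$ and $s$ be integers with $s \geq -1$ and $g \geq 4s + 14$, and put $d = g - s$. Then $d^2 - 6(2g-2)$ is not a perfect square. *)

From Stdlib Require Import ZArith Lia.
Open Scope Z_scope.
Definition is_perfect_square (n : Z) : Prop := exists k : Z, k * k = n.

From Stdlib Require Import ZArith Lia.
Open Scope Z_scope.

(* With m = d - 6 the number equals m^2 - 12(s+2).  The hypothesis g >= 4s + 14
   puts it strictly above (m-2)^2, it is below m^2, and it differs from (m-1)^2
   by an odd number; so it lies strictly between two consecutive squares. *)

Lemma not_square_between_consecutive (n a : Z) :
  0 <= a -> a * a < n < (a + 1) * (a + 1) -> ~ is_perfect_square n.
Proof.
  intros Ha Hn [k Hk]; subst n.
  assert (Habs : Z.abs k * Z.abs k = k * k) by nia.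
  rewrite <- Habs in Hn.
  destruct (Z_lt_le_dec (Z.abs k) (a + 1)); nia.
Qed.

Lemma not_square_two_below (n m : Z) :
  0 <= m - 2 -> (m - 2) * (m - 2) < n < m * m -> n <> (m - 1) * (m - 1) ->
  ~ is_perfect_square n.
Proof.
  intros Hm Hn Hne.
  destruct (Z_lt_le_dec n ((m - 1) * (m - 1))).
  - apply (not_square_between_consecutive n (m - 2)); [lia | split; lia].
  - apply (not_square_between_consecutive n (m - 1)); [lia | split; lia].
Qed.

Theorem lemma2p1 (g s : Z) (hs : -1 <= s) (hg : 4 * s + 14 <= g) :
  ~ is_perfect_square ((g - s) ^ 2 - 6 * (2 * g - 2)).
Proof.
  set (m := g - s - 6).
  assert (Hval : (g - s) ^ 2 - 6 * (2 * g - 2) = m * m - 12 * (s + 2))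
    by (unfold m; ring).
  rewrite Hval.
  apply (not_square_two_below _ m); unfold m; [lia | split; nia |].
  intro E; assert (2 * (g - s - 6) = 12 * s + 25) by nia; lia.
Qed.
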